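(* Let $M$ and $D$ be $n\times n$ matrices with entries in $\mathbb{Z}_2$ such that $M$ is non-degenerate and $D$ is diagonal. Then $\operatorname{rk}(M+D)\ge \operatorname{rk}(M+I)/2$, where $I$ is the $n\times n$ identity matrix.
   Context: A matrix is diagonal if all its entries outside the main diagonal are $0$. Ranks are over $\mathbb{Z}_2$. *)

From mathcomp Require Import all_boot all_order all_algebra all_fingroup.
Set Implicit Arguments. Unset Strict Implicit. Unset Printing Implicit Defensive.

From mathcomp Require Import all_boot all_order all_algebra all_fingroup.
From mathcomp Require Import zify.
Set Implicit Arguments. Unset Strict Implicit. Unset Printing Implicit Defensive.
Import GRing.Theory.
Local Open Scope ring_scope.

(* The theorem holds over any field once "diagonal over Z_2" is replaced by
   "idempotent": every diagonal matrix over 'F_2 satisfies D^2 = D, since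
   x^2 = x for both elements of 'F_2.  For an idempotent P, the products
   P (1 - P) = 0 forces rank P + rank (1 - P) <= n.  Writing
     M + 1 = (M + P) + (1 - P)   and   M = (M + P) - P
   and using subadditivity of the rank together with rank M = n, we get
     rank (M + 1) <= rank (M + P) + rank (1 - P)
                  <= rank (M + P) + (n - rank P) <= 2 rank (M + P). *)

Lemma F2_mulxx (x : 'F_2) : x * x = x.
Proof. by case: x => [[|[|//]]] ?; apply/val_inj. Qed.

Lemma diag_F2_idempotent (n : nat) (D : 'M['F_2]_n) :
  is_diag_mx D -> D *m D = D.
Proof.
move=> /diag_mxP [d ->]; rewrite mul_diag_mx; apply/matrixP => i j.
by rewrite !mxE; case: (eqVneq i j) => _; rewrite ?mulr0 ?mulr1 ?F2_mulxx.
Qed.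

Section IdempotentRank.
Variables (F : fieldType) (n : nat).

(* An idempotent P and its complement 1 - P have complementary kernels,
   so their ranks add up to at most n. *)
Lemma rank_idempotent_compl (P : 'M[F]_n) :
  P *m P = P -> (\rank P + \rank (1%:M - P)%R <= n)%N.
Proof.
move=> idemP; apply: mulmx0_rank_max.
by rewrite mulmxBr mulmx1 idemP subrr.
Qed.

Lemma rank_unit_add_idempotent (M P : 'M[F]_n) :
  M \in unitmx -> P *m P = P ->
  (\rank (M + 1%:M)%R <= 2 * \rank (M + P)%R)%N.
Proof.
move=> Munit idemP.
have splitI : (\rank (M + 1%:M)%R <= \rank (M + P)%R + \rank (1%:M - P)%R)%N.
  have -> : M + 1%:M = (M + P) + (1%:M - P) by rewrite addrA addrAC addrK.
  exact: mxrank_add.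
have splitM : (n <= \rank (M + P)%R + \rank P)%N.
  rewrite -{1}(mxrank_unit Munit) -(mxrank_opp P).
  by rewrite -{1}[M](addrK P); exact: mxrank_add.
have := rank_idempotent_compl idemP; lia.
Qed.

End IdempotentRank.

Theorem mainTheorem5 (n : nat) (M D : 'M['F_2]_n) :
  M \in unitmx -> is_diag_mx D ->
  (\rank ((M + 1%:M)%R) <= 2 * \rank ((M + D)%R))%N.
Proof.
move=> Munit Ddiag.
exact: rank_unit_add_idempotent Munit (diag_F2_idempotent Ddiag).
Qed.
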